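(* Let $1\le\ell\le r$ and $0\le k\le\ell-1$. Every ideal $I$ of $R_\ell$ with $J_{\ell,k+1}(0)\subseteq I\subseteq J_{\ell,k}(0)$ is of the form $$I=J_{\ell,k+1}(0)+(nF_{\ell,k})=(nF_{\ell,k},F_{\ell,k+1},F_{\ell,k+2},\dots,F_{\ell,\ell-1})$$ for some $n\in\mathbb{Z}$.
   Context: Fix a prime $p$ and an integer $r\ge0$. For $0\le k\le r$ let $R_k$ be the commutative ring which is free as a $\mathbb{Z}$-module with basis $X_{k,0},\dots,X_{k,k}$ and multiplication $X_{k,i}X_{k,j}=p^{k-\max(i,j)}X_{k,\min(i,j)}$; thus $X_{k,k}=1$, and an integer $n$ is identified with $nX_{k,k}$. For $0\le i\le\ell\le r$ put $F_{\ell,i}=X_{\ell,i}-p^{\ell-i}\in R_\ell$. For $0\le k\le\ell$ and $x\in\mathbb{Z}$, $J_{\ell,k}(x)\subseteq R_\ell$ is the ideal generated by $x,F_{\ell,k},F_{\ell,k+1},\dots,F_{\ell,\ell-1}$ if $k\le\ell-1$, and $J_{\ell,\ell}(x)=xR_\ell$ (so $J_{\ell,\ell}(0)=0$). *)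

From HB Require Import structures.
From mathcomp Require Import all_boot all_order all_algebra.
Unset Printing Implicit Defensive.
Import Order.TTheory GRing.Theory Num.Theory.
Local Open Scope ring_scope.

(* Elements of R_l are coefficient vectors w.r.t. the Z-basis X_{l,0},...,X_{l,l}. *)
Definition Rel (l : nat) := 'rV[int]_(l.+1).

(* Basis element X_{l,i} (for i <= l; out-of-range i gives 0). *)
Definition Xb (l i : nat) : Rel l := \row_(m < l.+1) (if (m == i :> nat) then 1 else 0).

(* Multiplication: X_{l,i} X_{l,j} = p^(l - max(i,j)) X_{l,min(i,j)}, extended bilinearly. *)
Definition mulR (p l : nat) (x y : Rel l) : Rel l :=
  \row_(m < l.+1) \sum_(i < l.+1) \sum_(j < l.+1)
     (if (minn i j == m :> nat) then x 0 i * y 0 j * (p%:Z) ^+ (l - maxn i j) else 0).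

(* An integer n is identified with n X_{l,l}. *)
Definition intR (l : nat) (n : int) : Rel l := n *: Xb l l.

Definition FF (p l i : nat) : Rel l := Xb l i - intR l ((p%:Z) ^+ (l - i)).

Definition gen_ideal (p l : nat) (gs : seq (Rel l)) (x : Rel l) : Prop :=
  exists cs : seq (Rel l), size cs = size gs /\
    x = \sum_(i < size gs) mulR p l (nth 0 cs i) (nth 0 gs i).

Definition JJ (p l k : nat) (x : int) : Rel l -> Prop :=
  gen_ideal p l ((intR l x) :: [seq FF p l i | i <- iota k (l - k)]).

Definition is_ideal (p l : nat) (I : Rel l -> Prop) : Prop :=
  [/\ I 0,
      (forall x y, I x -> I y -> I (x + y)),
      (forall x, I x -> I (- x)) &
      (forall a x, I x -> I (mulR p l a x))].

From HB Require Import structures.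
From mathcomp Require Import all_boot all_order all_algebra.
Import Order.TTheory GRing.Theory Num.Theory.
Local Open Scope ring_scope.
From Stdlib Require Import Wf_nat Classical.
From mathcomp Require Import zify ring.

(* Write F := F_{l,k} and J' := J_{l,k+1}(0) = (F_{l,k+1}, ..., F_{l,l-1}).
   1. The multiplication of R_l is bilinear, X_{l,l} is its unit, and an
      integer n acts as the scalar n.  On basis elements, X_i F_k = 0 for
      i <= k and X_i F_k = p^(l-i) F_k - p^(l-k) F_i for i > k.
   2. Generated ideals are closed under sums and integer multiples, contain
      all multiples of their generators, and lie in every ideal containing
      the generators.
   3. By 1, every element of J_{l,k}(0) is congruent modulo J' to an integer
      multiple c F of F.
   4. For an ideal J' <= I <= J_{l,k}(0), the integers c with c F in I form an
      ideal of Z, hence equal nZ for some n (least positive element argument).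
   5. By 3 and 4, I = J' + (nF); by 2 this equals (nF, F_{l,k+1}, ..., F_{l,l-1}). *)

Section Multiplication.
Variables (p l : nat).
Local Notation mulR := (mulR p l).
Local Notation R := (Rel l).

Lemma mulRDl (x y z : R) : mulR (x + y) z = mulR x z + mulR y z.
Proof.
apply/rowP=> m; rewrite !mxE -big_split; apply: eq_bigr=> i _.
rewrite -big_split; apply: eq_bigr=> j _; case: ifP=> _; rewrite ?mxE ?addr0 //.
by rewrite !mulrDl.
Qed.

Lemma mulRDr (x y z : R) : mulR x (y + z) = mulR x y + mulR x z.
Proof.
apply/rowP=> m; rewrite !mxE -big_split; apply: eq_bigr=> i _.
rewrite -big_split; apply: eq_bigr=> j _; case: ifP=> _; rewrite ?mxE ?addr0 //.
by rewrite mulrDr mulrDl.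
Qed.

Lemma mulRZl (a : int) (x y : R) : mulR (a *: x) y = a *: mulR x y.
Proof.
apply/rowP=> m; rewrite !mxE mulr_sumr; apply: eq_bigr=> i _.
rewrite mulr_sumr; apply: eq_bigr=> j _; case: ifP=> _; rewrite ?mxE ?mulr0 //.
by rewrite !mulrA.
Qed.

Lemma mulRZr (a : int) (x y : R) : mulR x (a *: y) = a *: mulR x y.
Proof.
apply/rowP=> m; rewrite !mxE mulr_sumr; apply: eq_bigr=> i _.
rewrite mulr_sumr; apply: eq_bigr=> j _; case: ifP=> _; rewrite ?mxE ?mulr0 //.
by rewrite mulrCA !mulrA.
Qed.

Lemma mulR0l (y : R) : mulR 0 y = 0.
Proof. by have := mulRZl 0 0 y; rewrite !scale0r. Qed.

Lemma mulR0r (y : R) : mulR y 0 = 0.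
Proof. by have := mulRZr 0 y 0; rewrite !scale0r. Qed.

Lemma mulRNr (x y : R) : mulR x (- y) = - mulR x y.
Proof. by rewrite -scaleN1r mulRZr scaleN1r. Qed.

Lemma mulR_suml I (r : seq I) (P : pred I) (F : I -> R) y :
  mulR (\sum_(i <- r | P i) F i) y = \sum_(i <- r | P i) mulR (F i) y.
Proof. exact: (big_morph (fun x => mulR x y) (fun a b => mulRDl a b y) (mulR0l y)). Qed.

Lemma mulR_sumr I (r : seq I) (P : pred I) (F : I -> R) y :
  mulR y (\sum_(i <- r | P i) F i) = \sum_(i <- r | P i) mulR y (F i).
Proof. exact: (big_morph (fun x => mulR y x) (fun a b => mulRDr y a b) (mulR0r y)). Qed.

Lemma basis_decomposition (x : R) : x = \sum_(i < l.+1) x 0 i *: Xb l i.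
Proof.
apply/rowP=> m; rewrite summxE (bigD1 m) //= big1 => [|i ne_im]; rewrite !mxE.
  by rewrite eqxx mulr1 addr0.
by case: eqP => [/val_inj e|]; [rewrite e eqxx in ne_im | rewrite mulr0].
Qed.

Lemma mulXX (i j : nat) : (i <= l)%N -> (j <= l)%N ->
  mulR (Xb l i) (Xb l j) = (p%:Z ^+ (l - maxn i j)) *: Xb l (minn i j).
Proof.
move=> hi hj; apply/rowP=> m; rewrite !mxE.
rewrite (bigD1 (Ordinal (hi : (i < l.+1)%N))) //= [X in _ + X]big1 ?addr0; last first.
  move=> i' ne_i; apply: big1 => j' _; case: ifP => // _; rewrite !mxE.
  by case: eqP => [e|]; [rewrite -(inj_eq val_inj) /= e eqxx in ne_i | rewrite !mul0r].
rewrite (bigD1 (Ordinal (hj : (j < l.+1)%N))) //= [X in _ + X]big1 ?addr0; last first.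
  move=> j' ne_j; case: ifP => // _; rewrite !mxE.
  have -> : (j' == j :> nat) = false by apply: contraNF ne_j => /eqP e; apply/eqP/val_inj.
  by rewrite mulr0 mul0r.
by rewrite !mxE !eqxx !mul1r eq_sym; case: ifP; rewrite ?mulr1 ?mulr0.
Qed.

Lemma mulR1l (y : R) : mulR (Xb l l) y = y.
Proof.
rewrite [in RHS](basis_decomposition y) [in LHS](basis_decomposition y) mulR_sumr.
apply: eq_bigr => i _; have hi : (i <= l)%N by rewrite -ltnS.
rewrite mulRZr mulXX // (maxn_idPl hi) (minn_idPr hi) subnn expr0 scale1r //.
Qed.

Lemma mulRint (z : int) (y : R) : mulR (intR l z) y = z *: y.
Proof. by rewrite /intR mulRZl mulR1l. Qed.

Lemma intR0 : intR l 0 = 0.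
Proof. by rewrite /intR scale0r. Qed.

Lemma FF_l : FF p l l = 0.
Proof. by rewrite /FF /intR subnn expr0 scale1r subrr. Qed.

Lemma mulXF_le (i k : nat) : (i <= k)%N -> (k <= l)%N -> mulR (Xb l i) (FF p l k) = 0.
Proof.
move=> hik hkl; have hil : (i <= l)%N by apply: leq_trans hkl.
rewrite /FF /intR mulRDr mulRNr mulRZr !mulXX // (maxn_idPr hik) (minn_idPl hik).
by rewrite (maxn_idPr hil) (minn_idPl hil) subnn expr0 scale1r subrr.
Qed.

Lemma mulXF_gt (i k : nat) : (k < i)%N -> (i <= l)%N ->
  mulR (Xb l i) (FF p l k) = p%:Z ^+ (l - i) *: FF p l k - p%:Z ^+ (l - k) *: FF p l i.
Proof.
move=> hki hil; have hkl : (k <= l)%N by apply: leq_trans (ltnW hki) hil.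
rewrite /FF /intR mulRDr mulRNr mulRZr !mulXX // (maxn_idPl (ltnW hki)).
rewrite (minn_idPr (ltnW hki)) (maxn_idPr hil) (minn_idPl hil) subnn expr0 scale1r.
by apply/rowP => m; rewrite !mxE; ring.
Qed.

End Multiplication.

(* An ideal of Z (given as a predicate) is principal: it consists of the
   multiples of its least positive element, or of 0 alone. *)
Lemma int_ideal_principal (S : int -> Prop) :
  S 0 -> (forall a b, S a -> S b -> S (a - b)) -> (forall z c, S c -> S (z * c)) ->
  exists n, S n /\ forall c, S c -> exists m, c = m * n.
Proof.
move=> S0 SB SM.
have [[c0 [c0_nz Sc0]]|all0] := classic (exists c, c != 0 /\ S c); last first.
  exists 0; split=> // c Sc; exists 0; rewrite mul0r.
  by apply/eqP/negPn/negP => c_nz; apply: all0; exists c.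
pose P m := (0 < m)%N /\ S m%:Z.
have P_abs c : c != 0 -> S c -> P (absz c).
  move=> c_nz Sc; split; first by rewrite absz_gt0.
  by rewrite abszE; case: (ltrP 0 c) => hc; [rewrite gtr0_norm | rewrite ler0_norm // -mulN1r; apply: SM].
have [n [[[n_gt0 Sn] n_min] _]] := dec_inh_nat_subset_has_unique_least_element
  P (fun m => classic (P m)) (ex_intro _ _ (P_abs c0 c0_nz Sc0)).
exists n%:Z; split=> // c Sc; exists (c %/ n%:Z)%Z.
have n_nz : n%:Z != 0 by rewrite eqz_nat -lt0n.
have Smod : S (c %% n%:Z)%Z.
  have -> : (c %% n%:Z)%Z = c - (c %/ n%:Z)%Z * n%:Z by rewrite {2}(divz_eq c n%:Z) addrC addKr.
  by apply: SB => //; apply: SM.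
have mod0 : (c %% n%:Z)%Z = 0.
  apply/eqP/negPn/negP => mod_nz; have := n_min _ (P_abs _ mod_nz Smod).
  have : (absz (c %% n%:Z)%Z < n)%N by rewrite -ltz_nat gez0_abs ?modz_ge0 ?ltz_pmod.
  lia.
by rewrite {1}(divz_eq c n%:Z) mod0 addr0.
Qed.

Section Ideals.
Variables (p l : nat).
Local Notation R := (Rel l).

Lemma gen_ideal_ind (P : R -> Prop) (gs : seq R) :
  P 0 -> (forall x y, P x -> P y -> P (x + y)) ->
  (forall a i, (i < size gs)%N -> P (mulR p l a (nth 0 gs i))) ->
  forall x, gen_ideal p l gs x -> P x.
Proof. by move=> P0 PD Pg x [cs [_ ->]]; apply: big_ind => // i _; apply: Pg. Qed.

Lemma gen_ideal0 gs : gen_ideal p l gs 0.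
Proof.
exists (nseq (size gs) 0); split; first by rewrite size_nseq.
by rewrite big1 // => i _; rewrite nth_nseq if_same mulR0l.
Qed.

Lemma gen_idealD gs x y :
  gen_ideal p l gs x -> gen_ideal p l gs y -> gen_ideal p l gs (x + y).
Proof.
move=> [c1 [_ ->]] [c2 [_ ->]].
exists (mkseq (fun i => nth 0 c1 i + nth 0 c2 i) (size gs)); split.
  by rewrite size_mkseq.
by rewrite -big_split; apply: eq_bigr => i _; rewrite nth_mkseq // mulRDl.
Qed.

Lemma gen_idealZ gs (z : int) x : gen_ideal p l gs x -> gen_ideal p l gs (z *: x).
Proof.
move=> [cs [_ ->]]; exists (mkseq (fun i => z *: nth 0 cs i) (size gs)); split.
  by rewrite size_mkseq.
by rewrite scaler_sumr; apply: eq_bigr => i _; rewrite nth_mkseq // mulRZl.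
Qed.

Lemma gen_ideal_gen gs a i :
  (i < size gs)%N -> gen_ideal p l gs (mulR p l a (nth 0 gs i)).
Proof.
move=> hi; exists (mkseq (fun j => if j == i then a else 0) (size gs)); split.
  by rewrite size_mkseq.
rewrite (bigD1 (Ordinal hi)) //= big1 ?addr0 => [|j ne_ji]; first by rewrite nth_mkseq // eqxx.
rewrite nth_mkseq //.
have -> : (j == i :> nat) = false by apply: contraNF ne_ji => /eqP e; apply/eqP/val_inj.
by rewrite mulR0l.
Qed.

Lemma gen_ideal_head g gs (m : int) : gen_ideal p l (g :: gs) (m *: g).
Proof. by rewrite -(mulRint p l m); apply: (@gen_ideal_gen (g :: gs) _ 0). Qed.

Lemma gen_ideal_gen1 gs i : (i < size gs)%N -> gen_ideal p l gs (nth 0 gs i).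
Proof. by move=> hi; rewrite -(mulR1l p l (nth 0 gs i)); apply: gen_ideal_gen. Qed.

Lemma gen_ideal_min (I : R -> Prop) gs : is_ideal p l I ->
  (forall i, (i < size gs)%N -> I (nth 0 gs i)) ->
  forall x, gen_ideal p l gs x -> I x.
Proof.
move=> [I0 ID _ IM] Igs; apply: gen_ideal_ind => // a i hi; exact/IM/Igs.
Qed.

Lemma idealB (I : R -> Prop) x y : is_ideal p l I -> I x -> I y -> I (x - y).
Proof. by move=> [_ ID IN _] Ix Iy; apply/ID/IN. Qed.

Lemma idealZ (I : R -> Prop) (z : int) x : is_ideal p l I -> I x -> I (z *: x).
Proof. by move=> [_ _ _ IM] Ix; rewrite -(mulRint p); apply: IM. Qed.

(* The integers c with c y in an ideal form an ideal of Z, hence are the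
   multiples of a single n. *)
Lemma ideal_coefficients_principal (I : R -> Prop) y : is_ideal p l I ->
  exists n : int, I (n *: y) /\ forall c, I (c *: y) -> exists m, c = m * n.
Proof.
move=> ideal_I; apply: int_ideal_principal => [|a b Ia Ib|z c Ic].
- by rewrite scale0r; case: ideal_I.
- by rewrite scalerBl; apply: idealB ideal_I Ia Ib.
- by rewrite -scalerA; apply: idealZ ideal_I Ic.
Qed.

End Ideals.

Section Decomposition.
Variables (p l k : nat).
Hypothesis k_lt_l : (k < l)%N.
Local Notation R := (Rel l).
Local Notation F := (FF p l k).
Local Notation Jnext := (JJ p l k.+1 0).

Definition in_Jnext_ZF (x : R) : Prop := exists c : int, Jnext (x - c *: F).

(* F_{l,i} lies in J_{l,k+1}(0) for k < i <= l (F_{l,l} = 0). *)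
Lemma Jnext_FF i : (k < i)%N -> (i <= l)%N -> Jnext (FF p l i).
Proof.
move=> hki hil; have [i_lt_l|i_ge_l] := ltnP i l; last first.
  by rewrite (_ : i = l) ?FF_l; [apply: gen_ideal0 | lia].
have gen := @gen_ideal_gen1 p l (intR l 0 :: [seq FF p l i | i <- iota k.+1 (l - k.+1)])
  (i - k.+1).+1.
rewrite /= (nth_map 0%N) ?size_iota ?nth_iota ?subnKC // in gen; try lia.
by apply: gen; rewrite /= size_map size_iota; lia.
Qed.

Lemma in_Jnext_ZF0 : in_Jnext_ZF 0.
Proof. by exists 0; rewrite scale0r subr0; apply: gen_ideal0. Qed.

Lemma in_Jnext_ZFD x y : in_Jnext_ZF x -> in_Jnext_ZF y -> in_Jnext_ZF (x + y).
Proof.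
move=> [c1 h1] [c2 h2]; exists (c1 + c2).
by rewrite scalerDl opprD addrACA; apply: gen_idealD.
Qed.

Lemma in_Jnext_ZFZ (z : int) x : in_Jnext_ZF x -> in_Jnext_ZF (z *: x).
Proof. by move=> [c h]; exists (z * c); rewrite -scalerA -scalerBr; apply: gen_idealZ. Qed.

(* R_l F_{l,k} <= J_{l,k+1}(0) + Z F_{l,k}, by the basis formulas for X_i F_k. *)
Lemma in_Jnext_ZF_mulF a : in_Jnext_ZF (mulR p l a F).
Proof.
rewrite (@basis_decomposition l a) mulR_suml.
apply: big_ind => [||i _]; [exact: in_Jnext_ZF0 | exact: in_Jnext_ZFD|].
rewrite mulRZl; apply: in_Jnext_ZFZ; have hil : (i <= l)%N by rewrite -ltnS.
have [hik|hki] := leqP i k.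
  by rewrite mulXF_le ?(ltnW k_lt_l) //; apply: in_Jnext_ZF0.
exists (p%:Z ^+ (l - i)); rewrite mulXF_gt // addrAC subrr add0r -scaleNr.
by apply/gen_idealZ/Jnext_FF.
Qed.

Lemma Jnext_sub_gen g a :
  Jnext a -> gen_ideal p l (g :: [seq FF p l i | i <- iota k.+1 (l - k.+1)]) a.
Proof.
apply: gen_ideal_ind => [||b [|i] /= hi]; [exact: gen_ideal0 | exact: gen_idealD | |].
- by rewrite intR0 mulR0r; apply: gen_ideal0.
- exact: (@gen_ideal_gen p l _ b i.+1).
Qed.

Lemma JJ_decomposition x : JJ p l k 0 x -> in_Jnext_ZF x.
Proof.
rewrite /JJ (_ : (l - k = (l - k.+1).+1)%N); last by lia.
apply: gen_ideal_ind => [||a [|[|i]] /= hi]; [exact: in_Jnext_ZF0 | exact: in_Jnext_ZFD | | |].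
- by rewrite intR0 mulR0r; apply: in_Jnext_ZF0.
- exact: in_Jnext_ZF_mulF.
- exists 0; rewrite scale0r subr0.
  by apply: (@gen_ideal_gen p l _ a i.+1); move: hi; rewrite /= !size_map.
Qed.

End Decomposition.

Theorem lemma6 (p r l k : nat) (I : Rel l -> Prop) :
  prime p -> (1 <= l)%N -> (l <= r)%N -> (k <= l - 1)%N ->
  is_ideal p l I ->
  (forall x, JJ p l k.+1 0 x -> I x) ->
  (forall x, I x -> JJ p l k 0 x) ->
  exists n : int,
    (forall x, I x <->
       exists a b, JJ p l k.+1 0 a /\ gen_ideal p l [:: n *: FF p l k] b /\ x = a + b) /\
    (forall x, I x <->
       gen_ideal p l ((n *: FF p l k) :: [seq FF p l i | i <- iota k.+1 (l - k.+1)]) x).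
Proof.
move=> _ l_gt0 _ k_le ideal_I Jnext_sub_I I_sub_J.
have k_lt_l : (k < l)%N by lia.
set F := FF p l k.
have [n [InF n_div]] := @ideal_coefficients_principal p l I F ideal_I.
have I_split x : I x -> exists a (m : int), JJ p l k.+1 0 a /\ x = a + m *: (n *: F).
  move=> Ix; have [c Ja] := @JJ_decomposition p l k k_lt_l x (I_sub_J x Ix).
  have Ic : I (c *: F).
    by rewrite -(subKr x (c *: F)); apply: idealB ideal_I Ix (Jnext_sub_I _ Ja).
  have [m c_eq] := n_div c Ic.
  by exists (x - c *: F), m; rewrite scalerA -c_eq subrK.
exists n; split=> x; split.
- move=> /I_split [a [m [Ja ->]]].
  by exists a, (m *: (n *: F)); split; [exact: Ja | split; [exact: gen_ideal_head |]].
- move=> [a [b [Ja [Jb ->]]]]; case: (ideal_I) => _ ID _ _; apply: ID; first exact: Jnext_sub_I.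
  by apply: (@gen_ideal_min p l I _ ideal_I) Jb => -[|i] //= _.
- move=> /I_split [a [m [Ja ->]]].
  by apply: gen_idealD; [apply: Jnext_sub_gen | apply: gen_ideal_head].
- apply: (@gen_ideal_min p l I _ ideal_I) => -[|i] //= hi; apply/Jnext_sub_I.
  exact: (@gen_ideal_gen1 p l _ i.+1).
Qed.
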